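(* Let $M$ be a $po$-$\Gamma$-semigroup. Then $M$ is completely regular if and only if for every $a\in M$ there exist $x\in M$ and $\gamma,\mu,\rho,\xi\in\Gamma$ such that $$a\le (a\gamma a)\mu x\rho (a\xi a).$$
   Context: A $po$-$\Gamma$-semigroup is a triple $(M,\Gamma,\le)$ where $M,\Gamma$ are nonempty sets with a map $M\times\Gamma\times M\to M$, $(a,\gamma,b)\mapsto a\gamma b$, satisfying $(a\gamma b)\mu c=a\gamma(b\mu c)$ for all $a,b,c\in M$, $\gamma,\mu\in\Gamma$, and $\le$ is a partial order on $M$ such that $a\le b$ implies $a\gamma c\le b\gamma c$ and $c\gamma a\le c\gamma b$ for all $c\in M$, $\gamma\in\Gamma$. For $A,B\subseteq M$, $A\Gamma B=\{a\gamma b: a\in A,\gamma\in\Gamma,b\in B\}$ (with $a\Gamma B$ meaning $\{a\}\Gamma B$, etc.), and $(A]=\{t\in M: t\le a \text{ for some } a\in A\}$. $M$ is regular if $a\in(a\Gamma M\Gamma a]$ for all $a\in M$; left regular if $a\in(M\Gamma a\Gamma a]$ for all $a\in M$; right regular if $a\in(a\Gamma a\Gamma M]$ for all $a\in M$; completely regular if it is regular, left regular and right regular. *)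

Record poGammaSemigroup : Type := {
  carrier : Type;
  gamma : Type;
  carrier_inhabited : inhabited carrier;
  gamma_inhabited : inhabited gamma;
  op : carrier -> gamma -> carrier -> carrier;
  le : carrier -> carrier -> Prop;
  op_assoc : forall (a b c : carrier) (g m : gamma),
      op (op a g b) m c = op a g (op b m c);
  le_refl : forall a, le a a;
  le_antisym : forall a b, le a b -> le b a -> a = b;
  le_trans : forall a b c, le a b -> le b c -> le a c;
  le_compat_r : forall (a b c : carrier) (g : gamma), le a b -> le (op a g c) (op b g c);
  le_compat_l : forall (a b c : carrier) (g : gamma), le a b -> le (op c g a) (op c g b)
}.

Section Defs.
Variable M : poGammaSemigroup.

Definition down (A : carrier M -> Prop) : carrier M -> Prop :=
  fun t => exists a, A a /\ le M t a.

Definition aGMGa (a : carrier M) : carrier M -> Prop :=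
  fun t => exists (g : gamma M) (x : carrier M) (m : gamma M), t = op M (op M a g x) m a.
Definition MGaGa (a : carrier M) : carrier M -> Prop :=
  fun t => exists (x : carrier M) (g m : gamma M), t = op M (op M x g a) m a.
Definition aGaGM (a : carrier M) : carrier M -> Prop :=
  fun t => exists (g m : gamma M) (x : carrier M), t = op M (op M a g a) m x.

Definition regular : Prop := forall a, down (aGMGa a) a.
Definition left_regular : Prop := forall a, down (MGaGa a) a.
Definition right_regular : Prop := forall a, down (aGaGM a) a.
Definition completely_regular : Prop := regular /\ left_regular /\ right_regular.
End Defs.


(* Forward: substitute a <= y α a β a into the last factor of a <= a γ x μ a and
   a <= a δ a ε z into the first; reassociating exhibits the required form.
   Backward: the single inequality a <= (a γ a) μ x ρ (a ξ a) can be bracketed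
   so that its right-hand side lies in a Γ M Γ a, in M Γ a Γ a, or in a Γ a Γ M. *)

Section Sandwich.
Variable M : poGammaSemigroup.

Local Notation "a ⋅[ g ] b" := (op M a g b) (at level 40, left associativity).

Definition sandwich_regular : Prop :=
  forall a : carrier M, exists (x : carrier M) (g m r k : gamma M),
    le M a (((a ⋅[g] a) ⋅[m] x) ⋅[r] (a ⋅[k] a)).

Lemma down_le (A : carrier M -> Prop) (a t : carrier M) :
  A t -> le M a t -> down M A a.
Proof. intros At Hle; exists t; split; assumption. Qed.

Lemma completely_regular_sandwich : completely_regular M -> sandwich_regular.
Proof.
  intros [Hreg [Hleft Hright]] a.
  destruct (Hreg a) as [t [[g [x [m ->]]] Hx]].
  destruct (Hleft a) as [t [[y [al [be ->]]] Hy]].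
  destruct (Hright a) as [t [[de [ep [z ->]]] Hz]].
  exists (z ⋅[g] (x ⋅[m] y)), de, ep, al, be.
  apply le_trans with ((a ⋅[g] x) ⋅[m] (y ⋅[al] a ⋅[be] a)).
  - apply le_trans with (a ⋅[g] x ⋅[m] a); [exact Hx|].
    apply le_compat_l; exact Hy.
  - assert (Hmid : le M ((a ⋅[g] x) ⋅[m] (y ⋅[al] a ⋅[be] a))
                        ((a ⋅[de] a ⋅[ep] z ⋅[g] x) ⋅[m] (y ⋅[al] a ⋅[be] a))).
    { apply le_compat_r, le_compat_r; exact Hz. }
    rewrite !op_assoc in Hmid; rewrite !op_assoc; exact Hmid.
Qed.

Lemma sandwich_regular_regular : sandwich_regular -> regular M.
Proof.
  intros H a; destruct (H a) as [x [g [m [r [k Ha]]]]].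
  apply down_le with (a ⋅[g] ((a ⋅[m] x) ⋅[r] a) ⋅[k] a).
  - exists g, ((a ⋅[m] x) ⋅[r] a), k; reflexivity.
  - rewrite !op_assoc in Ha; rewrite !op_assoc; exact Ha.
Qed.

Lemma sandwich_regular_left_regular : sandwich_regular -> left_regular M.
Proof.
  intros H a; destruct (H a) as [x [g [m [r [k Ha]]]]].
  apply down_le with (((a ⋅[g] a) ⋅[m] x) ⋅[r] a ⋅[k] a).
  - exists ((a ⋅[g] a) ⋅[m] x), r, k; reflexivity.
  - rewrite !op_assoc in Ha; rewrite !op_assoc; exact Ha.
Qed.

Lemma sandwich_regular_right_regular : sandwich_regular -> right_regular M.
Proof.
  intros H a; destruct (H a) as [x [g [m [r [k Ha]]]]].
  apply down_le with (a ⋅[g] a ⋅[m] (x ⋅[r] (a ⋅[k] a))).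
  - exists g, m, (x ⋅[r] (a ⋅[k] a)); reflexivity.
  - rewrite !op_assoc in Ha; rewrite !op_assoc; exact Ha.
Qed.

End Sandwich.

Theorem proposition3 (M : poGammaSemigroup) :
  completely_regular M <->
  (forall a : carrier M, exists (x : carrier M) (g m r k : gamma M),
      le M a (op M (op M (op M a g a) m x) r (op M a k a))).
Proof.
  split.
  - exact (completely_regular_sandwich M).
  - intros H; repeat split.
    + exact (sandwich_regular_regular M H).
    + exact (sandwich_regular_left_regular M H).
    + exact (sandwich_regular_right_regular M H).
Qed.
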